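(* Let $I$ be a real interval centered at $0$ with $[-1,1]\subseteq I$, and let $f\colon I^n\to\mathbb{R}$ be a symmetric quasi-Lovász extension, $f=\check{L}\circ\varphi$, such that $f|_{I_+^n}$ or $f|_{I_-^n}$ is nonconstant. Then the following are equivalent: (i) $f_0$ is oddly homogeneous; (ii) there exists $A\subseteq[n]$ with $f_0(\mathbf{1}_A)\neq 0$; (iii) $\varphi(1)\neq 0$. Moreover, in this case $f_0(x\mathbf{1}_A)=\frac{\varphi(x)}{\varphi(1)}f_0(\mathbf{1}_A)$ for all $x\in I$ and all $A\subseteq[n]$.
   Context: Notation: $[n]=\{1,\ldots,n\}$; $I_+=I\cap[0,\infty[$, $I_-=I\cap\,]-\infty,0]$; $\mathbf{1}_A$ is the indicator tuple of $A\subseteq[n]$, $\mathbf{0}=\mathbf{1}_\varnothing$; for a function $g$, $g_0=g-g(\mathbf{0})$; $\mathbf{x}^+$ has components $\max(x_i,0)$ and $\mathbf{x}^-=(-\mathbf{x})^+$. For $\sigma$ a permutation of $[n]$, $\mathbb{R}^n_\sigma=\{\mathbf{x}: x_{\sigma(1)}\leq\cdots\leq x_{\sigma(n)}\}$, $A^\uparrow_\sigma(i)=\{\sigma(i),\ldots,\sigma(n)\}$, $A^\uparrow_\sigma(n+1)=\varnothing$. The Lovász extension $L_\psi\colon\mathbb{R}^n\to\mathbb{R}$ of $\psi\colon\{0,1\}^n\to\mathbb{R}$ is the function whose restriction to each $\mathbb{R}^n_\sigma$ is the unique affine function agreeing with $\psi$ at the points $\mathbf{1}_{A^\uparrow_\sigma(k)}$,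 $k\in[n+1]$. The symmetric Lovász extension of $\psi$ is $\check{L}_\psi(\mathbf{x})=\psi(\mathbf{0})+L_\psi(\mathbf{x}^+)-L_\psi(\mathbf{x}^-)$; a symmetric Lovász extension is any $\check{L}_\psi$. A symmetric quasi-Lovász extension is $f(\mathbf{x})=\check{L}(\varphi(x_1),\ldots,\varphi(x_n))$ with $\check{L}$ a symmetric Lovász extension and $\varphi\colon I\to\mathbb{R}$ nondecreasing and odd. A function $g\colon I^n\to\mathbb{R}$ ($I$ centered at $0$) is oddly homogeneous if there exists a nondecreasing odd $\phi\colon I\to\mathbb{R}$ with $g(x\mathbf{1}_A)=\phi(x)g(\mathbf{1}_A)$ for all $x\in I$, $A\subseteq[n]$. *)

From HB Require Import structures.
From mathcomp Require Import all_boot all_order all_algebra all_fingroup.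
Set Implicit Arguments. Unset Strict Implicit. Unset Printing Implicit Defensive.
Import Order.TTheory GRing.Theory Num.Theory.
Local Open Scope ring_scope.

Section Defs.
Variables (R : realFieldType) (n : nat).

(* points of R^n are functions 'I_n -> R; the index set [n] is 'I_n (0-based) *)

Definition ind (A : {set 'I_n}) : 'I_n -> R := fun i => if i \in A then 1 else 0.

Definition vpos (x : 'I_n -> R) : 'I_n -> R := fun i => Num.max (x i) 0.
Definition vneg (x : 'I_n -> R) : 'I_n -> R := vpos (fun i => - x i).

Definition in_cone (s : 'S_n) (x : 'I_n -> R) : Prop :=
  forall i j : 'I_n, (i <= j)%N -> x (s i) <= x (s j).

(* A^up_sigma(k) = {sigma k, ..., sigma (n-1)}, for k = 0..n; k = n gives the empty set *)
Definition Aup (s : 'S_n) (k : nat) : {set 'I_n} := [set s i | i : 'I_n & (k <= i)%N].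

(* L is the Lovász extension of psi : {0,1}^n -> R (pseudo-Boolean functions are
   seen as functions on subsets of [n]): on each cone R^n_sigma, L coincides with
   an affine function agreeing with psi at the points 1_{A^up_sigma(k)}. *)
Definition is_Lovasz_ext (psi : {set 'I_n} -> R) (L : ('I_n -> R) -> R) : Prop :=
  forall s : 'S_n, exists (c : R) (w : 'I_n -> R),
    (forall x, in_cone s x -> L x = c + \sum_(i < n) w i * x i) /\
    (forall k : nat, (k <= n)%N ->
       c + \sum_(i < n) w i * ind (Aup s k) i = psi (Aup s k)).

Definition sym_Lovasz (psi : {set 'I_n} -> R) (L : ('I_n -> R) -> R)
  (x : 'I_n -> R) : R := psi set0 + L (vpos x) - L (vneg x).

Definition in_dom (I : pred R) (x : 'I_n -> R) : Prop := forall i, I (x i).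

Definition nondecr_on (I : pred R) (phi : R -> R) : Prop :=
  forall x y, I x -> I y -> x <= y -> phi x <= phi y.

Definition odd_on (I : pred R) (phi : R -> R) : Prop :=
  forall x, I x -> phi (- x) = - phi x.

Definition zeroed (g : ('I_n -> R) -> R) : ('I_n -> R) -> R :=
  fun x => g x - g (fun _ => 0).

Definition oddly_homogeneous (I : pred R) (g : ('I_n -> R) -> R) : Prop :=
  exists phi : R -> R, nondecr_on I phi /\ odd_on I phi /\
    forall (x : R) (A : {set 'I_n}), I x ->
      g (fun i => x * ind A i) = phi x * g (ind A).

Definition nonconst_on (D : ('I_n -> R) -> Prop) (g : ('I_n -> R) -> R) : Prop :=
  exists x y, D x /\ D y /\ g x <> g y.

End Defs.
Arguments ind {R n} A i.

(* On a scaled indicator t 1_A, the Lovász extension L is read off the cone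
   containing 1_A, which gives L(t 1_A) = psi(0) + t (psi(A) - psi(0)) for t >= 0;
   splitting t into t^+ - t^- extends this to the symmetric extension for every t.
   Hence f_0(x 1_A) = phi(x) (psi(A) - psi(0)), and everything follows: phi(1) >= 0
   by monotonicity, psi is not constant since f is not, and if phi(1) = 0 then
   odd homogeneity forces phi to vanish on I, making f constant. *)
From HB Require Import structures.
From mathcomp Require Import all_boot all_order all_algebra all_fingroup.
From mathcomp Require Import ring.
From Stdlib Require Import FunctionalExtensionality.
Import Order.TTheory GRing.Theory Num.Theory.
Local Open Scope ring_scope.

Lemma exists_in_cone {R : realFieldType} {n : nat} (x : 'I_n -> R) :
  exists s : 'S_n, in_cone s x.
Proof.
case: n x => [|m] x; first by exists 1%g => -[].
pose r i j := x i <= x j.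
pose ss := sort r (enum 'I_m.+1).
have size_ss : size ss = m.+1 by rewrite size_sort size_enum_ord.
have uniq_ss : uniq ss by rewrite sort_uniq enum_uniq.
have sorted_ss : sorted r ss by apply: sort_sorted => a b; apply: le_total.
pose g (i : 'I_m.+1) := nth ord0 ss i.
have g_inj : injective g.
  move=> i j /eqP; rewrite /g nth_uniq ?size_ss //.
  by move/eqP/val_inj.
exists (perm g_inj) => i j le_ij; rewrite !permE.
apply: (sorted_leq_nth (leT := r)) => //; rewrite ?inE ?size_ss //.
- by move=> a b c; apply: le_trans.
- by move=> a; apply: lexx.
Qed.

Lemma ind_Aup (R : realFieldType) (n : nat) (s : 'S_n) (k : nat) (j : 'I_n) :
  ind (Aup s k) (s j) = (if (k <= j)%N then 1 else 0 : R).
Proof. by rewrite /ind /Aup mem_imset ?inE //; apply: perm_inj. Qed.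

Lemma Aup_n (n : nat) (s : 'S_n) : Aup s n = set0.
Proof.
apply/setP => a; rewrite inE; apply/imsetP => -[i]; rewrite inE => le_ni _.
by move: (ltn_ord i); rewrite ltnNge le_ni.
Qed.

(* Sorting 1_A puts the elements of A last, so A is an upper set of the order. *)
Lemma ind_in_cone_Aup (R : realFieldType) (n : nat) (A : {set 'I_n}) :
  exists (s : 'S_n) (k : nat),
    [/\ (k <= n)%N, Aup s k = A & in_cone s (ind A : 'I_n -> R)].
Proof.
have [s s_cone] := exists_in_cone (ind A : 'I_n -> R).
pose P k := (k == n) || [exists i : 'I_n, (i == k :> nat) && (s i \in A)].
have exP : exists k, P k by exists n; rewrite /P eqxx.
case: (ex_minnP exP) => k Pk k_min; exists s, k; split => //.
  by case/orP: Pk => [/eqP -> //|/existsP [i /andP [/eqP <- _]]]; apply: ltnW.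
apply/setP => a; apply/imsetP/idP.
- case=> i; rewrite inE => le_ki ->.
  case/orP: Pk => [/eqP k_n|/existsP [j /andP [/eqP j_k sjA]]].
    by move: le_ki (ltn_ord i); rewrite k_n ltnNge => ->.
  have := s_cone j i; rewrite j_k => /(_ le_ki).
  by rewrite /ind sjA; case: (s i \in A); rewrite // leNgt ltr01.
- move=> aA; exists ((s^-1)%g a); last by rewrite permKV.
  rewrite inE; apply: k_min; apply/orP; right; apply/existsP.
  by exists ((s^-1)%g a); rewrite eqxx permKV aA.
Qed.

Section LovaszExtension.
Variables (R : realFieldType) (n : nat) (psi : {set 'I_n} -> R).
Variable (L : ('I_n -> R) -> R).
Hypothesis L_ext : is_Lovasz_ext psi L.

Lemma Lovasz_ext_offset {s : 'S_n} {c : R} {w : 'I_n -> R} :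
  (forall k, (k <= n)%N -> c + \sum_(i < n) w i * ind (Aup s k) i = psi (Aup s k)) ->
  c = psi set0.
Proof.
move=> /(_ n (leqnn n)); rewrite Aup_n => <-.
by rewrite big1 ?addr0 // => i _; rewrite /ind inE mulr0.
Qed.

Lemma Lovasz_ext_scaled_ind (A : {set 'I_n}) (t : R) : 0 <= t ->
  L (fun i => t * ind A i) = psi set0 + t * (psi A - psi set0).
Proof.
move=> t_ge0.
have [s [k [le_kn AupA A_cone]]] := @ind_in_cone_Aup R n A.
have [c [w [L_affine L_interp]]] := L_ext s.
rewrite L_affine; last by move=> i j le_ij; rewrite ler_wpM2l ?A_cone.
rewrite -AupA -(L_interp k le_kn) (Lovasz_ext_offset L_interp).
rewrite addrAC subrr add0r mulr_sumr; congr (_ + _).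
by apply: eq_bigr => i _; rewrite mulrCA.
Qed.

(* For constant psi the interpolation conditions force all weights to vanish. *)
Lemma Lovasz_ext_const : (forall A, psi A = psi set0) -> forall x, L x = psi set0.
Proof.
move=> psi_const x.
have [s x_cone] := exists_in_cone x.
have [c [w [L_affine L_interp]]] := L_ext s.
have c_psi0 := Lovasz_ext_offset L_interp.
have tail_sum0 k : (k <= n)%N -> \sum_(j < n | (k <= j)%N) w (s j) = 0.
  move=> le_kn; apply: (@addrI _ c).
  rewrite addr0 [RHS]c_psi0 -(psi_const (Aup s k)) -(L_interp k le_kn).
  rewrite [in RHS](reindex_inj (@perm_inj _ s)) /= [in LHS]big_mkcond /=.
  congr (_ + _); apply: eq_bigr => j _.
  by rewrite ind_Aup; case: ifP; rewrite ?mulr1 ?mulr0.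
have w0 (j : 'I_n) : w (s j) = 0.
  have := tail_sum0 j (ltnW (ltn_ord j)); rewrite (bigD1 j) //=.
  rewrite (eq_bigl (fun i : 'I_n => (j.+1 <= i)%N)) => [|i].
    by rewrite tail_sum0 ?addr0.
  by rewrite ltn_neqAle andbC eq_sym.
rewrite L_affine // c_psi0 big1 ?addr0 // => i _.
by rewrite -(permKV s i) w0 mul0r.
Qed.

Lemma vpos_scaled_ind (A : {set 'I_n}) (t : R) :
  vpos (fun i => t * ind A i) = (fun i => Num.max t 0 * ind A i).
Proof.
by apply: functional_extensionality => i; rewrite /vpos /ind; case: (i \in A);
  rewrite ?mulr1 ?mulr0 ?maxxx.
Qed.

Lemma sym_Lovasz_scaled_ind (A : {set 'I_n}) (t : R) :
  sym_Lovasz psi L (fun i => t * ind A i) = psi set0 + t * (psi A - psi set0).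
Proof.
rewrite /sym_Lovasz.
have -> : vneg (fun i => t * ind A i) = vpos (fun i => - t * ind A i).
  by congr vpos; apply: functional_extensionality => i; rewrite mulNr.
rewrite !vpos_scaled_ind !Lovasz_ext_scaled_ind ?le_max ?lexx ?orbT //.
have max_sub : Num.max t 0 - Num.max (- t) 0 = t.
  have [t_ge0|t_lt0] := leP 0 t.
    by rewrite max_r ?subr0 // oppr_le0.
  by rewrite max_l ?sub0r ?opprK // oppr_ge0 ltW.
by rewrite -[t in RHS]max_sub; ring.
Qed.

End LovaszExtension.

Arguments Lovasz_ext_const {R n psi L}.
Arguments sym_Lovasz_scaled_ind {R n psi L}.

Section QuasiLovaszExtension.
Variables (R : realFieldType) (n : nat) (I : pred R) (phi : R -> R).
Variables (psi : {set 'I_n} -> R) (L : ('I_n -> R) -> R) (f : ('I_n -> R) -> R).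
Hypotheses (I_unit : forall x, -1 <= x -> x <= 1 -> I x)
  (L_ext : is_Lovasz_ext psi L) (phi_odd : odd_on I phi)
  (f_def : forall x, in_dom I x -> f x = sym_Lovasz psi L (fun i => phi (x i))).

Lemma I_0 : I 0. Proof. by apply: I_unit; rewrite ?oppr_le0 ?ler01. Qed.

Lemma I_1 : I 1.
Proof. by apply: I_unit; rewrite // (le_trans (lerN10 _) ler01). Qed.

Lemma phi_0 : phi 0 = 0.
Proof.
have := phi_odd 0 I_0; rewrite oppr0 => /eqP; rewrite -subr_eq0 opprK.
by rewrite -mulr2n mulrn_eq0 /= => /eqP.
Qed.

Lemma f_scaled_ind (x : R) (A : {set 'I_n}) : I x ->
  f (fun i => x * ind A i) = psi set0 + phi x * (psi A - psi set0).
Proof.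
move=> Ix; rewrite f_def => [|i]; last by rewrite /ind; case: (i \in A);
  rewrite ?mulr1 ?mulr0 // I_0.
rewrite -(sym_Lovasz_scaled_ind L_ext); congr sym_Lovasz.
by apply: functional_extensionality => i; rewrite /ind; case: (i \in A);
  rewrite ?mulr1 ?mulr0 ?phi_0.
Qed.

Lemma zeroed_f_scaled_ind (x : R) (A : {set 'I_n}) : I x ->
  zeroed f (fun i => x * ind A i) = phi x * (psi A - psi set0).
Proof.
move=> Ix; rewrite /zeroed f_scaled_ind //.
have -> : (fun _ => 0) = (fun i => 0 * ind A i) :> ('I_n -> R).
  by apply: functional_extensionality => i; rewrite mul0r.
by rewrite f_scaled_ind ?I_0 // phi_0 mul0r addr0 addrAC subrr add0r.
Qed.

Lemma zeroed_f_ind (A : {set 'I_n}) : zeroed f (ind A) = phi 1 * (psi A - psi set0).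
Proof.
rewrite -zeroed_f_scaled_ind ?I_1 //; apply: congr1.
by apply: functional_extensionality => i; rewrite mul1r.
Qed.

Lemma f_const_of_phi_vanish : (forall x, I x -> phi x = 0) ->
  forall x, in_dom I x -> f x = psi set0.
Proof.
move=> phi_vanish x Ix; rewrite f_def //.
have -> : (fun i => phi (x i)) = (fun i => 0 * ind set0 i).
  by apply: functional_extensionality => i; rewrite phi_vanish // mul0r.
by rewrite (sym_Lovasz_scaled_ind L_ext) mul0r addr0.
Qed.

Lemma f_const_of_psi_const : (forall A, psi A = psi set0) ->
  forall x, in_dom I x -> f x = psi set0.
Proof.
move=> psi_const x Ix.
by rewrite f_def // /sym_Lovasz !(Lovasz_ext_const L_ext) // addrK.
Qed.

End QuasiLovaszExtension.

Arguments I_0 {R I}.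
Arguments I_1 {R I}.
Arguments phi_0 {R I phi}.
Arguments zeroed_f_scaled_ind {R n I phi psi L f}.
Arguments zeroed_f_ind {R n I phi psi L f}.
Arguments f_const_of_phi_vanish {R n I phi psi L f}.
Arguments f_const_of_psi_const {R n I phi psi L f}.

Theorem proposition7 (R : realFieldType) (n : nat) (I : pred R)
    (phi : R -> R) (psi : {set 'I_n} -> R) (L : ('I_n -> R) -> R)
    (f : ('I_n -> R) -> R) :
  (* I is a real interval centered at 0 containing [-1,1] *)
  (forall x y z, I x -> I z -> x <= y -> y <= z -> I y) ->
  (forall x, I x -> I (- x)) ->
  (forall x, -1 <= x -> x <= 1 -> I x) ->
  (* f = Lcheck o phi is a symmetric quasi-Lovász extension on I^n *)
  is_Lovasz_ext psi L ->
  nondecr_on I phi -> odd_on I phi ->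
  (forall x, in_dom I x -> f x = sym_Lovasz psi L (fun i => phi (x i))) ->
  (* f restricted to I_+^n or to I_-^n is nonconstant *)
  (nonconst_on (fun x => in_dom I x /\ forall i, 0 <= x i) f \/
   nonconst_on (fun x => in_dom I x /\ forall i, x i <= 0) f) ->
  ((oddly_homogeneous I (zeroed f) <-> exists A : {set 'I_n}, zeroed f (ind A) <> 0) /\
   ((exists A : {set 'I_n}, zeroed f (ind A) <> 0) <-> phi 1 <> 0)) /\
  (phi 1 <> 0 -> forall (x : R) (A : {set 'I_n}), I x ->
     zeroed f (fun i => x * ind A i) = phi x / phi 1 * zeroed f (ind A)).
Proof.
move=> _ _ I_unit L_ext phi_mono phi_odd f_def f_nonconst.
have f_scaled := zeroed_f_scaled_ind I_unit L_ext phi_odd f_def.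
have f_ind := zeroed_f_ind I_unit L_ext phi_odd f_def.
have f_not_const : ~ forall x, in_dom I x -> f x = psi set0.
  by move=> f_const; case: f_nonconst => -[x [y [[Ix _] [[Iy _]]]]]; rewrite !f_const.
have [A0 psiA0] : exists A, psi A - psi set0 != 0.
  have [/existsP //|/existsPn psi_const] := boolP [exists A, psi A - psi set0 != 0].
  exfalso; apply: f_not_const.
  apply: (f_const_of_psi_const L_ext f_def) => A.
  by apply/eqP; rewrite -subr_eq0; apply/negPn/psi_const.
have phi1_ge0 : 0 <= phi 1.
  by rewrite -(phi_0 I_unit phi_odd) phi_mono ?(I_0 I_unit) ?(I_1 I_unit) ?ler01.
have ii_iii : (exists A, zeroed f (ind A) <> 0) <-> phi 1 <> 0.
  split=> [[B fB0] phi1_0 | phi1_neq0]; first by rewrite f_ind phi1_0 mul0r in fB0.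
  by exists A0; rewrite f_ind; apply/eqP; rewrite mulf_neq0 //; apply/eqP.
have scaling (phi1_neq0 : phi 1 <> 0) x A : I x ->
    zeroed f (fun i => x * ind A i) = phi x / phi 1 * zeroed f (ind A).
  by move=> Ix; rewrite f_scaled // f_ind mulrA divfK //; apply/eqP.
split; [split=> //; split | exact: scaling].
- case=> g [_ [_ g_hom]]; apply/ii_iii => phi1_0; apply: f_not_const.
  apply: (f_const_of_phi_vanish L_ext f_def) => x Ix; apply/eqP.
  have := g_hom x A0 Ix; rewrite f_scaled // f_ind phi1_0 mul0r mulr0.
  by move/eqP; rewrite mulf_eq0 (negbTE psiA0) orbF.
- move=> /ii_iii phi1_neq0; exists (fun x => phi x / phi 1); split; [|split].
  + by move=> x y Ix Iy le_xy; rewrite ler_wpM2r ?invr_ge0 ?phi_mono.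
  + by move=> x Ix; rewrite phi_odd // mulNr.
  + exact: scaling.
Qed.
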